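(* Let $\rho_A,\rho_B\in\mathcal{P}(\mathcal{X})$, $h=1/N$, and let $(\rho_h,m_h)\in V^1_{n,h}\times V^0_{e,h}$ with $\mathcal{E}_h(\rho_h,m_h)\le\bar E<\infty$. Then there is a constant $\bar M<\infty$ depending only on $(\mathcal{X},Q,\pi)$ and $\bar E$ (and not on $h$) such that $\|m_h\|_{L^2([0,1],\mathbb{R}^{\mathcal{X}\times\mathcal{X}})}\le\bar M$.
   Context: Setting: $\mathcal{X}$ finite, $Q:\mathcal{X}\times\mathcal{X}\to[0,\infty)$ with $Q(x,x)=0$, irreducible, reversible with respect to its stationary distribution $\pi>0$, $\sum\pi=1$. $\mathcal{P}(\mathcal{X})=\{\rho\ge0:\sum_x\pi(x)\rho(x)=1\}$. $(\mathrm{div}_{\mathcal{X}}\Psi)(x)=\frac12\sum_yQ(x,y)(\Psi(y,x)-\Psi(x,y))$. $\theta:[0,\infty)^2\to[0,\infty)$ is continuous, concave, 1-homogeneous, symmetric, $C^\infty$ on $(0,\infty)^2$, $\theta(0,s)=\theta(s,0)=0$, $\theta(s,s)=s$, $\theta>0$ on $(0,\infty)^2$, nondecreasing in each argument; $\theta=-\infty$ if an argument is negative. $\alpha(s,t,m)=m^2/\theta(s,t)$ if $\theta(s,t)>0$, $0$ if $\theta(s,t)=0=m$, $+\infty$ otherwise. Time discretization: $h=1/N$, $t_i=ih$, $I_i=[t_i,t_{i+1})$; $V^1_{n,h}$: continuous functions $[0,1]\to\mathbb{R}^{\mathcal{X}}$ affine on each $I_i$; $V^0_{e,h}$: functions $[0,1]\to\mathbb{R}^{\mathcal{X}\times\mathcal{X}}$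 constant on each $I_i$ (value $m(t_i)$). $\mathcal{CE}_h(\rho_A,\rho_B)$: $(\rho_h,m_h)\in V^1_{n,h}\times V^0_{e,h}$ with $\rho_h(t_0)=\rho_A$, $\rho_h(t_N)=\rho_B$ and $(\rho_h(t_{i+1})-\rho_h(t_i))/h+\mathrm{div}_{\mathcal{X}}m_h(t_i)=0$ for $i=0,\dots,N-1$. For $\rho_h\in V^1_{n,h}$, $(\mathrm{avg}_h\rho_h)(t_i)=\frac12(\rho_h(t_i)+\rho_h(t_{i+1}))$. $\mathcal{A}_h(\rho_h,m_h)=\frac h2\sum_{i=0}^{N-1}\sum_{x,y}\alpha((\mathrm{avg}_h\rho_h)(t_i,x),(\mathrm{avg}_h\rho_h)(t_i,y),m_h(t_i,x,y))Q(x,y)\pi(x)$, and $\mathcal{E}_h(\rho_h,m_h)=\mathcal{A}_h(\rho_h,m_h)$ if $(\rho_h,m_h)\in\mathcal{CE}_h(\rho_A,\rho_B)$ and $+\infty$ otherwise. *)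

From HB Require Import structures.
From mathcomp Require Import all_boot all_order all_algebra.
From mathcomp Require Import all_classical all_reals all_analysis.
Set Implicit Arguments. Unset Strict Implicit. Unset Printing Implicit Defensive.
Import Order.TTheory GRing.Theory Num.Theory.
Import numFieldNormedType.Exports.
Local Open Scope classical_set_scope.
Local Open Scope ring_scope.

Section Defs.
Variable R : realType.

Definition Qrel (T : finType) (Q : T -> T -> R) : rel T := fun a b => 0 < Q a b.

Definition markov_setting (T : finType) (Q : T -> T -> R) (pi : T -> R) : Prop :=
  [/\ (forall x y, 0 <= Q x y) /\ (forall x, Q x x = 0),
      (forall x y, connect (Qrel Q) x y),
      ((forall x, 0 < pi x) /\ (\sum_(x : T) pi x) = 1),
      (forall y, (\sum_(x : T) pi x * Q x y) = pi y * \sum_(z : T) Q y z)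
    & (forall x y, pi x * Q x y = pi y * Q y x)].

Definition prob_density (T : finType) (pi : T -> R) (rho : T -> R) : Prop :=
  (forall x, 0 <= rho x) /\ \sum_x pi x * rho x = 1.

Definition divX (T : finType) (Q : T -> T -> R) (Psi : T -> T -> R) (x : T) : R :=
  2^-1 * \sum_y Q x y * (Psi y x - Psi x y).

Definition pdiff (b : bool) (f : R -> R -> R) : R -> R -> R :=
  if b then fun s t => derive1 (fun u => f u t) s
  else fun s t => derive1 (fun u => f s u) t.

Fixpoint iter_pd (l : seq bool) (f : R -> R -> R) : R -> R -> R :=
  if l is b :: l' then pdiff b (iter_pd l' f) else f.

Definition smooth_on_pos_quadrant (f : R -> R -> R) : Prop :=
  forall (l : seq bool) (s t : R), 0 < s -> 0 < t ->
    [/\ derivable (fun u => iter_pd l f u t) s 1,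
        derivable (fun u => iter_pd l f s u) t 1
      & {for (s, t), continuous (fun p : R * R => iter_pd l f p.1 p.2)}].

(* theta : [0,oo)^2 -> [0,oo) (values at negative arguments are irrelevant:
   they are treated as -oo inside [alpha] below). *)
Definition admissible_theta (theta : R -> R -> R) : Prop :=
  [/\ [/\ (forall s t, 0 <= s -> 0 <= t -> 0 <= theta s t),
      {within [set p : R * R | 0 <= p.1 /\ 0 <= p.2],
         continuous (fun p : R * R => theta p.1 p.2)},
      (forall (a s1 t1 s2 t2 : R), 0 <= a <= 1 -> 0 <= s1 -> 0 <= t1 ->
          0 <= s2 -> 0 <= t2 ->
          a * theta s1 t1 + (1 - a) * theta s2 t2
            <= theta (a * s1 + (1 - a) * s2) (a * t1 + (1 - a) * t2))
    & (forall (l s t : R), 0 <= l -> 0 <= s -> 0 <= t ->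
          theta (l * s) (l * t) = l * theta s t)],
      (forall s t, 0 <= s -> 0 <= t -> theta s t = theta t s),
      smooth_on_pos_quadrant theta &
   [/\ (forall s, 0 <= s -> theta 0 s = 0 /\ theta s 0 = 0),
       (forall s, 0 <= s -> theta s s = s),
       (forall s t, 0 < s -> 0 < t -> 0 < theta s t)
     & (forall s s' t, 0 <= s -> s <= s' -> 0 <= t ->
          theta s t <= theta s' t /\ theta t s <= theta t s')]].

(* alpha(s,t,m) = m^2/theta(s,t) if theta(s,t) > 0, 0 if theta(s,t) = 0 = m,
   +oo otherwise; theta = -oo when an argument is negative. *)
Definition alpha (theta : R -> R -> R) (s t m : R) : \bar R :=
  if (0 <= s) && (0 <= t) then
    if 0 < theta s t then ((m ^+ 2) / theta s t)%:E
    else if (theta s t == 0) && (m == 0) then 0%E else +oo%E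
  else +oo%E.

(* ---------- Time discretisation, h = 1/N ----------
   rho_h in V^1_{n,h} is represented by its nodal values rho i = rho_h(t_i),
   i = 0..N (it is affine in between); m_h in V^0_{e,h} by its values
   m i = m_h(t_i), i = 0..N-1 (it is constant on I_i = [t_i,t_{i+1})).
   Values at other indices are irrelevant. *)

Definition hstep (N : nat) : R := N%:R^-1.

Definition CE_h (T : finType) (Q : T -> T -> R) (N : nat)
    (rhoA rhoB : T -> R) (rho : nat -> T -> R) (m : nat -> T -> T -> R) : Prop :=
  [/\ rho 0%N = rhoA, rho N = rhoB &
      forall i : nat, (i < N)%N -> forall x,
        (rho i.+1 x - rho i x) / hstep N + divX Q (m i) x = 0].

Definition avg_h (T : finType) (rho : nat -> T -> R) (i : nat) (x : T) : R :=
  2^-1 * (rho i x + rho i.+1 x).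

Definition action_h (T : finType) (Q : T -> T -> R) (pi : T -> R)
    (theta : R -> R -> R) (N : nat)
    (rho : nat -> T -> R) (m : nat -> T -> T -> R) : \bar R :=
  ((hstep N / 2)%:E *
    \sum_(i < N) \sum_x \sum_y
       (alpha theta (avg_h rho i x) (avg_h rho i y) (m i x y) *
        (Q x y * pi x)%:E))%E.

Definition energy_h (T : finType) (Q : T -> T -> R) (pi : T -> R)
    (theta : R -> R -> R) (N : nat) (rhoA rhoB : T -> R)
    (rho : nat -> T -> R) (m : nat -> T -> T -> R) : \bar R :=
  if `[< CE_h Q N rhoA rhoB rho m >] then action_h Q pi theta N rho m
  else +oo%E.

Definition sqnorm_e (T : finType) (Q : T -> T -> R) (pi : T -> R)
    (Psi : T -> T -> R) : R :=
  2^-1 * \sum_x \sum_y Psi x y ^+ 2 * Q x y * pi x.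

(* L^2([0,1], R^{X x X}) norm of the piecewise constant m_h:
   int_0^1 ||m_h(t)||^2 dt = sum_i h ||m_h(t_i)||^2. *)
Definition L2norm_e (T : finType) (Q : T -> T -> R) (pi : T -> R) (N : nat)
    (m : nat -> T -> T -> R) : R :=
  Num.sqrt (\sum_(i < N) hstep N * sqnorm_e Q pi (m i)).

End Defs.

From mathcomp Require Import all_boot all_order all_algebra.
From mathcomp Require Import all_classical all_reals all_analysis.
From mathcomp Require Import ring.
Import Order.TTheory GRing.Theory Num.Theory.
Local Open Scope ring_scope.

(* By reversibility the discrete continuity equation conserves the mass
   sum_x pi(x) rho(t_i, x) = 1, and finiteness of the action forces the
   averaged densities to be nonnegative (isolated states never move), so
   0 <= avg rho <= 1/pi(x) <= C with C := 1 + sum_x 1/pi(x).  Monotonicity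
   and theta(C, C) = C then give theta(avg rho(x), avg rho(y)) <= C, hence
   m^2 <= C alpha(avg rho(x), avg rho(y), m) edgewise; summing,
   ||m_h||^2 <= C A_h(rho_h, m_h) <= C Ebar.  (The 1 in C only keeps C > 0
   when X is empty.) *)

Lemma le_sum_inv_weights {R : numFieldType} {T : finType} {w f : T -> R} (z : T) :
  (forall x, 0 < w x) -> (forall x, 0 <= f x) -> \sum_x w x * f x <= 1 ->
  f z <= \sum_x (w x)^-1.
Proof.
move=> w_gt0 f_ge0 sum_le1.
have wf_le1 : w z * f z <= 1.
  apply: le_trans sum_le1; rewrite (bigD1 z) //= lerDl.
  by apply: sumr_ge0 => x _; rewrite mulr_ge0 // ltW.
have inv_le : (w z)^-1 <= \sum_x (w x)^-1.
  by rewrite (bigD1 z) //= lerDl; apply: sumr_ge0 => x _; rewrite invr_ge0 ltW.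
apply: le_trans inv_le.
by rewrite -(ler_pM2l (w_gt0 z)) mulfV ?gt_eqF.
Qed.

Lemma lee_sum_term {R : realDomainType} {I : finType} (F : I -> \bar R) (j : I) :
  (forall i, (0 <= F i)%E) -> (F j <= \sum_i F i)%E.
Proof. by move=> F_ge0; rewrite (bigD1 j) //= leeDl // sume_ge0. Qed.

Lemma hstep_gt0 {R : realType} (N : nat) : (0 < N)%N -> 0 < hstep R N.
Proof. by move=> N_gt0; rewrite invr_gt0 ltr0n. Qed.

Section Divergence.
Context {R : realType} {T : finType} (Q : T -> T -> R) (pi : T -> R).

Lemma sum_pi_divX_eq0 (Psi : T -> T -> R) :
  (forall x y, pi x * Q x y = pi y * Q y x) -> \sum_x pi x * divX Q Psi x = 0.
Proof.
move=> rev; rewrite /divX.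
under eq_bigr do rewrite mulrCA mulr_sumr.
rewrite -mulr_sumr [X in _ * X](_ : _ = 0) ?mulr0 //.
under eq_bigr do under eq_bigr do rewrite mulrA mulrBr.
under eq_bigr do rewrite sumrB.
(* detailed balance makes the two halves of the flux equal after exchanging x and y *)
rewrite sumrB; apply/eqP; rewrite subr_eq0 exchange_big /=; apply/eqP.
by apply: eq_bigr => y _; apply: eq_bigr => x _; rewrite rev.
Qed.

Lemma divX_isolated (Psi : T -> T -> R) (z : T) :
  (forall y, Q z y = 0) -> divX Q Psi z = 0.
Proof. by move=> Qz0; rewrite /divX big1 ?mulr0 // => y _; rewrite Qz0 mul0r. Qed.

End Divergence.

Section DiscreteContinuityEquation.
Context {R : realType} {T : finType} {Q : T -> T -> R} { pi : T -> R }.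
Context {N : nat} {rhoA rhoB : T -> R}.
Context {rho : nat -> T -> R} {m : nat -> T -> T -> R}.
Hypothesis ce : CE_h Q N rhoA rhoB rho m.

Lemma CE_h_step (i : nat) (x : T) : (i < N)%N ->
  rho i.+1 x = rho i x - hstep R N * divX Q (m i) x.
Proof.
case: ce => _ _ ce_eq iN.
have h_neq0 : hstep R N != 0 by rewrite gt_eqF // hstep_gt0 // (leq_ltn_trans _ iN).
have := congr1 (fun e => e * hstep R N) (ce_eq i iN x).
rewrite mul0r mulrDl divfK // => eq0.
by apply/eqP; rewrite -subr_eq0 -eq0; apply/eqP; ring.
Qed.

Lemma CE_h_isolated (z : T) (i : nat) :
  (forall y, Q z y = 0) -> (i <= N)%N -> rho i z = rhoA z.
Proof.
case: ce => rho0 _ _ Qz0; elim: i => [|i IH] iN; first by rewrite rho0.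
by rewrite CE_h_step // divX_isolated // mulr0 subr0 IH // ltnW.
Qed.

Hypothesis rev : forall x y, pi x * Q x y = pi y * Q y x.

Lemma CE_h_mass (i : nat) : (i <= N)%N ->
  \sum_x pi x * rho i x = \sum_x pi x * rhoA x.
Proof.
case: ce => rho0 _ _; elim: i => [|i IH] iN; first by rewrite rho0.
rewrite -IH; last exact: ltnW.
under eq_bigr do rewrite CE_h_step // mulrBr mulrCA.
by rewrite sumrB -mulr_sumr sum_pi_divX_eq0 // mulr0 subr0.
Qed.

Lemma avg_h_mass (i : nat) : (i < N)%N ->
  \sum_x pi x * avg_h rho i x = \sum_x pi x * rhoA x.
Proof.
move=> iN; under eq_bigr do rewrite /avg_h mulrCA mulrDr.
by rewrite -mulr_sumr big_split /= !CE_h_mass ?(ltnW iN) // mulrDr mulrC -splitr.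
Qed.

End DiscreteContinuityEquation.

Section Alpha.
Context {R : realType}.

Lemma alpha_ge0 (theta : R -> R -> R) (s t m : R) : (0 <= alpha theta s t m)%E.
Proof.
rewrite /alpha; case: ifP => // _; case: ifP => [theta_gt0|_]; last by case: ifP.
by rewrite lee_fin divr_ge0 ?sqr_ge0 ?ltW.
Qed.

Lemma sqr_le_alpha (theta : R -> R -> R) (s t c m : R) :
  0 < c -> theta s t <= c -> ((m ^+ 2)%:E <= c%:E * alpha theta s t m)%E.
Proof.
move=> c_gt0 theta_le; have c_oo : (c%:E * +oo = +oo)%E by rewrite mulry gtr0_sg ?mul1e.
rewrite /alpha; case: ifP => _; last by rewrite c_oo leey.
case: ifP => [theta_gt0|_].
  by rewrite -EFinM lee_fin mulrCA ler_peMr ?sqr_ge0 // ler_pdivlMr // mul1r.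
by case: ifP => [/andP[_ /eqP->]|_]; rewrite ?c_oo ?leey // mule0 expr0n.
Qed.

End Alpha.

Section ActionBounds.
Context {R : realType} {T : finType} {Q : T -> T -> R} { pi : T -> R }.
Hypotheses (Q_ge0 : forall x y, 0 <= Q x y) (pi_ge0 : forall x, 0 <= pi x).
Context {theta : R -> R -> R} {N : nat}.
Context {rho : nat -> T -> R} {m : nat -> T -> T -> R}.

Definition edge_action (i : nat) (x y : T) : \bar R :=
  (alpha theta (avg_h rho i x) (avg_h rho i y) (m i x y) * (Q x y * pi x)%:E)%E.

Lemma edge_action_ge0 (i : nat) (x y : T) : (0 <= edge_action i x y)%E.
Proof. by rewrite mule_ge0 ?alpha_ge0 // lee_fin mulr_ge0. Qed.

Lemma action_h_ge_edge (i : 'I_N) (x y : T) :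
  ((hstep R N / 2)%:E * edge_action i x y <= action_h Q pi theta N rho m)%E.
Proof.
apply: lee_wpmul2l; first by rewrite lee_fin divr_ge0 // invr_ge0.
apply: le_trans (lee_sum_term (fun j : 'I_N => \sum_z \sum_w edge_action j z w) i _).
  apply: le_trans (lee_sum_term (fun z => \sum_w edge_action i z w) x _).
    exact: lee_sum_term (fun w => edge_action i x w) y (edge_action_ge0 i x).
  by move=> z; apply: sume_ge0 => w _; apply: edge_action_ge0.
by move=> j; apply: sume_ge0 => z _; apply: sume_ge0 => w _; apply: edge_action_ge0.
Qed.

Lemma action_h_lt_pinfty_avg_ge0 (i : 'I_N) (x y : T) :
  0 < Q x y -> 0 < pi x -> (action_h Q pi theta N rho m < +oo)%E ->
  0 <= avg_h rho i x.
Proof.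
move=> Qxy_gt0 pix_gt0; rewrite leNgt; apply: contraTN => avg_lt0.
rewrite -leNgt; apply: le_trans (action_h_ge_edge i x y).
have h_gt0 : 0 < hstep R N / 2.
  by rewrite divr_gt0 // hstep_gt0 // (leq_ltn_trans _ (ltn_ord i)).
rewrite /edge_action /alpha ifF; last by rewrite leNgt avg_lt0.
by rewrite gt0_mulye ?lte_fin ?mulr_gt0 // mulry gtr0_sg ?mul1e.
Qed.

Lemma sum_sqnorm_le_action {c : R} : 0 < c ->
  (forall (i : 'I_N) x y, theta (avg_h rho i x) (avg_h rho i y) <= c) ->
  ((\sum_(i < N) hstep R N * sqnorm_e Q pi (m i))%:E
     <= c%:E * action_h Q pi theta N rho m)%E.
Proof.
move=> c_gt0 theta_le.
have edge_le (i : 'I_N) x y :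
    ((m i x y ^+ 2 * Q x y * pi x)%:E <= c%:E * edge_action i x y)%E.
  by rewrite muleA -mulrA EFinM lee_wpmul2r ?lee_fin ?mulr_ge0 ?sqr_le_alpha.
have -> : \sum_(i < N) hstep R N * sqnorm_e Q pi (m i)
    = hstep R N / 2 * \sum_(i < N) \sum_x \sum_y m i x y ^+ 2 * Q x y * pi x.
  by rewrite mulr_sumr; apply: eq_bigr => i _; rewrite /sqnorm_e mulrA.
rewrite EFinM /action_h muleCA; apply: lee_wpmul2l.
  by rewrite lee_fin divr_ge0 // invr_ge0.
rewrite -sumEFin ge0_sume_distrr; last first.
  by move=> i _; apply: sume_ge0 => x _; apply: sume_ge0 => y _; apply: edge_action_ge0.
apply: lee_sum => i _; rewrite -sumEFin ge0_sume_distrr; last first.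
  by move=> x _; apply: sume_ge0 => y _; apply: edge_action_ge0.
apply: lee_sum => x _; rewrite -sumEFin ge0_sume_distrr; last first.
  by move=> y _; apply: edge_action_ge0.
by apply: lee_sum => y _; apply: edge_le.
Qed.

End ActionBounds.

Lemma theta_le_diag {R : realType} (theta : R -> R -> R) (s t c : R) :
  admissible_theta theta -> 0 <= s <= c -> 0 <= t <= c -> theta s t <= c.
Proof.
move=> [_ _ _ [_ theta_diag _ theta_mono]] /andP[s_ge0 s_le] /andP[t_ge0 t_le].
have c_ge0 : 0 <= c := le_trans s_ge0 s_le.
apply: le_trans (theta_mono _ _ _ s_ge0 s_le t_ge0).1 _.
by rewrite -[leRHS](theta_diag c c_ge0); apply: (theta_mono _ _ _ t_ge0 t_le c_ge0).2.
Qed.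

Lemma CE_h_avg_ge0 {R : realType} {T : finType} {Q : T -> T -> R} { pi : T -> R }
    {theta : R -> R -> R} {N : nat} {rhoA rhoB : T -> R}
    {rho : nat -> T -> R} {m : nat -> T -> T -> R} :
  (forall x y, 0 <= Q x y) -> (forall x, 0 < pi x) -> (forall x, 0 <= rhoA x) ->
  CE_h Q N rhoA rhoB rho m -> (action_h Q pi theta N rho m < +oo)%E ->
  forall (i : 'I_N) (z : T), 0 <= avg_h rho i z.
Proof.
move=> Q_ge0 pi_gt0 rhoA_ge0 ce action_fin i z.
have pi_ge0 x : 0 <= pi x by exact: ltW.
have [[y Qzy_gt0]|no_edge] := pselect (exists y, 0 < Q z y).
  exact: (action_h_lt_pinfty_avg_ge0 Q_ge0 pi_ge0 i z y Qzy_gt0 (pi_gt0 z) action_fin).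
have Qz0 y : Q z y = 0.
  by apply/eqP; rewrite eq_le Q_ge0 andbT leNgt; apply/negP => ?; apply: no_edge; exists y.
by rewrite /avg_h !(CE_h_isolated ce) ?(ltnW (ltn_ord i)) // mulr_ge0 // addr_ge0.
Qed.

Theorem lemma3p7 (R : realType) (T : finType) (Q : T -> T -> R) (pi : T -> R) :
  markov_setting Q pi ->
  forall Ebar : R, exists Mbar : R,
  forall theta : R -> R -> R, admissible_theta theta ->
  forall N : nat, (0 < N)%N ->
  forall rhoA rhoB : T -> R, prob_density pi rhoA -> prob_density pi rhoB ->
  forall (rho : nat -> T -> R) (m : nat -> T -> T -> R),
    (energy_h Q pi theta N rhoA rhoB rho m <= Ebar%:E)%E ->
    L2norm_e Q pi N m <= Mbar.
Proof.
move=> [[Q_ge0 _] _ [pi_gt0 _] _ rev] Ebar.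
pose C := 1 + \sum_x (pi x)^-1.
have C_gt0 : 0 < C by rewrite ltr_pwDl // sumr_ge0 // => x _; rewrite invr_ge0 ltW.
exists (Num.sqrt (C * Ebar)).
move=> theta theta_adm N _ rhoA rhoB [rhoA_ge0 rhoA_mass] _ rho m.
rewrite /energy_h; case: asboolP => [ce action_le|_]; last by rewrite leye_eq.
have avg_ge0 := CE_h_avg_ge0 Q_ge0 pi_gt0 rhoA_ge0 ce (le_lt_trans action_le (ltry _)).
have avg_le (i : 'I_N) z : avg_h rho i z <= C.
  apply: (ler_wpDl ler01 (le_sum_inv_weights z pi_gt0 (avg_ge0 i) _)).
  by rewrite (avg_h_mass ce rev) // rhoA_mass.
have theta_le (i : 'I_N) x y : theta (avg_h rho i x) (avg_h rho i y) <= C.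
  by apply: theta_le_diag; rewrite ?avg_ge0 ?avg_le.
rewrite /L2norm_e ler_wsqrtr // -lee_fin EFinM.
have pi_ge0 x : 0 <= pi x := ltW (pi_gt0 x).
apply: le_trans (sum_sqnorm_le_action Q_ge0 pi_ge0 C_gt0 theta_le) _.
by apply: lee_wpmul2l; rewrite // lee_fin ltW.
Qed.
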